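(* Let $\Delta$ be a pure quasi-forest of dimension $d-1$ with $f$-vector $(f_0,f_1,\ldots,f_{d-1})$. Then $(f_0,\ldots,f_{d-1})$ is unimodal, i.e., there is $j$ with $f_0\le f_1\le\cdots\le f_j\ge f_{j+1}\ge\cdots\ge f_{d-1}$.
   Context: A simplicial complex $\Delta$ on $[n]$ is a collection of subsets of $[n]$ containing all singletons and closed under taking subsets; $\dim\Delta=d-1$ where $d$ is the maximal face size; facets are maximal faces; $\Delta$ is pure if all facets have the same cardinality; $f_i$ is the number of faces with $i+1$ elements. For facets $F_{i_1},\ldots,F_{i_q}$, $\langle F_{i_1},\ldots,F_{i_q}\rangle$ is the subcomplex of all faces contained in some $F_{i_j}$. A facet $F$ is a leaf if there is another facet $G\neq F$ with $H\cap F\subset G\cap F$ for all facets $H\neq F$. A quasi-forest is a simplicial complex whose facets admit an ordering $H_1,\ldots,H_m$ such that for each $1<j\le m$, $H_j$ is a leaf of $\langle H_1,\ldots,H_j\rangle$. *)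

From mathcomp Require Import all_boot.
Set Implicit Arguments. Unset Strict Implicit. Unset Printing Implicit Defensive.

Definition is_simplicial_complex (n : nat) (D : {set {set 'I_n}}) : Prop :=
  (forall i : 'I_n, [set i] \in D) /\
  (forall F G : {set 'I_n}, F \in D -> G \subset F -> G \in D).

Definition facets (n : nat) (D : {set {set 'I_n}}) : {set {set 'I_n}} :=
  [set F in D | [forall G in D, (F \subset G) ==> (G == F)]].

(* d = maximal face size, so dim D = d - 1 *)
Definition face_size_max (n : nat) (D : {set {set 'I_n}}) : nat :=
  \max_(F in D) #|F|.

(* f_i = number of faces with i+1 elements *)
Definition fvec (n : nat) (D : {set {set 'I_n}}) (i : nat) : nat :=
  #|[set F in D | #|F| == i.+1]|.

Definition pure (n : nat) (D : {set {set 'I_n}}) : Prop :=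
  forall F G, F \in facets D -> G \in facets D -> #|F| = #|G|.

Definition gen_complex (n : nat) (s : seq {set 'I_n}) : {set {set 'I_n}} :=
  [set G : {set 'I_n} | has (fun F : {set 'I_n} => G \subset F) s].

Definition is_leaf (n : nat) (D : {set {set 'I_n}}) (F : {set 'I_n}) : Prop :=
  F \in facets D /\
  exists G, [/\ G \in facets D, G != F &
    forall H, H \in facets D -> H != F -> H :&: F \subset G :&: F].

(* ordering H_1,...,H_m of the facets such that H_j is a leaf of
   <H_1,...,H_j> for 1 < j <= m (0-based index j in [1, m)) *)
Definition quasi_forest (n : nat) (D : {set {set 'I_n}}) : Prop :=
  exists s : seq {set 'I_n},
    perm_eq s (enum (facets D)) /\
    forall j, 0 < j < size s -> is_leaf (gen_complex (take j.+1 s)) (nth set0 s j).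

Definition unimodal_upto (f : nat -> nat) (d : nat) : Prop :=
  exists j, (forall i, i < j -> i.+1 < d -> f i <= f i.+1) /\
            (forall i, j <= i -> i.+1 < d -> f i.+1 <= f i).

From mathcomp Require Import all_boot zify.
Set Implicit Arguments. Unset Strict Implicit. Unset Printing Implicit Defensive.

(* List the facets H_1, ..., H_m of the quasi-forest in leaf order; all have
   size d.  A face first appears in <H_1, ..., H_j> when it lies in H_j but in
   no earlier facet, and the leaf condition says that the faces of H_j already
   present are exactly the subsets of K = G :&: H_j for the branch G of H_j.
   So step j adds 'C(d, s) - 'C(#|K|, s) faces of size s (just 'C(d, s) for
   j = 1).  Each of these sequences is nondecreasing while 2s < d and
   nonincreasing from 2s >= d on, a property stable under sums, so the
   f-vector is unimodal with its peak at index (d - 1)/2. *)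

Definition unimodal_mid (d : nat) (g : nat -> nat) : Prop :=
  forall s, (2 * s < d -> g s <= g s.+1) /\ (d <= 2 * s -> g s.+1 <= g s).

Lemma eq_unimodal_mid d g h : g =1 h -> unimodal_mid d g -> unimodal_mid d h.
Proof. by move=> eq_gh g_mid s; rewrite -!eq_gh. Qed.

Lemma unimodal_midD d g h :
  unimodal_mid d g -> unimodal_mid d h -> unimodal_mid d (fun s => g s + h s).
Proof. by move=> g_mid h_mid s; have := g_mid s; have := h_mid s; lia. Qed.

Lemma unimodal_mid_upto d g :
  unimodal_mid d g -> unimodal_upto (fun i => g i.+1) d.
Proof.
move=> g_mid; exists d.-1./2.
by split=> i hi _; [apply: (g_mid i.+1).1 | apply: (g_mid i.+1).2]; lia.
Qed.

Lemma leq_bin_succ d s : 2 * s < d -> 'C(d, s) <= 'C(d, s.+1).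
Proof.
move=> lt2sd; rewrite -(leq_pmul2l (ltn0Sn s)) mul_bin_left.
by apply: leq_mul => //; lia.
Qed.

Lemma geq_bin_succ d s : d <= (2 * s).+1 -> 'C(d, s.+1) <= 'C(d, s).
Proof.
move=> le_d2s; rewrite -(leq_pmul2l (ltn0Sn s)) mul_bin_left.
by apply: leq_mul => //; lia.
Qed.

Lemma unimodal_mid_bin d : unimodal_mid d (fun s => 'C(d, s)).
Proof. by move=> s; split=> h; [apply: leq_bin_succ | apply: geq_bin_succ; lia]. Qed.

Lemma leq_bin_diff_succ k d s : k <= d -> 2 * s < d ->
  'C(d, s) + 'C(k, s.+1) <= 'C(d, s.+1) + 'C(k, s).
Proof.
move=> le_kd lt2sd; have [le_k2s | lt2sk] := leqP k (2 * s).+1.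
  by have := leq_bin_succ lt2sd; have := geq_bin_succ le_k2s; lia.
rewrite -(subnK le_kd); elim: (d - k) => [|m IHm]; first by rewrite addnC.
case: s {lt2sd} lt2sk IHm => [|s] lt2sk IHm; first by rewrite !bin0 !bin1 in IHm *; lia.
by rewrite addSn !binS; have := @leq_bin_succ (m + k) s; lia.
Qed.

Lemma geq_bin_diff_succ k d s : k <= d -> d <= 2 * s ->
  'C(d, s.+1) + 'C(k, s) <= 'C(d, s) + 'C(k, s.+1).
Proof.
move=> le_kd; rewrite -(subnK le_kd); elim: (d - k) => [|m IHm] le_d2s.
  by rewrite addnC.
case: s le_d2s IHm => [|s] le_d2s IHm; first lia.
by rewrite addSn !binS; have := @geq_bin_succ (m + k) s; lia.
Qed.

Lemma unimodal_mid_bin_diff k d : k <= d ->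
  unimodal_mid d (fun s => 'C(d, s) - 'C(k, s)).
Proof.
move=> le_kd s; have := leq_bin2l s le_kd; have := leq_bin2l s.+1 le_kd.
split=> h; [have := leq_bin_diff_succ le_kd h | have := geq_bin_diff_succ le_kd h]; lia.
Qed.

Definition level (T : finType) (A : {set {set T}}) (s : nat) : {set {set T}} :=
  [set F in A | #|F| == s].

Lemma card_level0 (T : finType) s : #|level (set0 : {set {set T}}) s| = 0.
Proof. by apply: eq_card0 => F; rewrite !inE. Qed.

Lemma card_level_powerset (T : finType) (H : {set T}) s :
  #|level (powerset H) s| = 'C(#|H|, s).
Proof. by rewrite -cards_draws; apply: eq_card => F; rewrite !inE. Qed.

Lemma card_levelU (T : finType) (A B : {set {set T}}) s :
  #|level (A :|: B) s| = #|level A s| + (#|level B s| - #|level (B :&: A) s|).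
Proof.
have -> : level (A :|: B) s = level A s :|: level B s.
  by apply/setP => F; rewrite !inE andb_orl.
have -> : level (B :&: A) s = level B s :&: level A s.
  by apply/setP => F; rewrite !inE; case: (#|F| == s); rewrite ?andbT ?andbF.
by rewrite addnBA ?subset_leq_card ?subsetIl // cardsU setIC.
Qed.

Section Complexes.
Variable n : nat.
Implicit Types (D : {set {set 'I_n}}) (F G H X Y : {set 'I_n}) (t : seq {set 'I_n}).

Lemma gen_complexP t F :
  reflect (exists2 H, H \in t & F \subset H) (F \in gen_complex t).
Proof. by rewrite inE; apply: hasP. Qed.

Lemma gen_complex_nil : gen_complex [::] = set0 :> {set {set 'I_n}}.
Proof. by apply/setP => F; rewrite !inE. Qed.

Lemma gen_complex_rcons t H :
  gen_complex (rcons t H) = gen_complex t :|: powerset H.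
Proof. by apply/setP => F; rewrite !inE has_rcons orbC. Qed.

Lemma face_sub_facet D F : F \in D -> exists2 H, H \in facets D & F \subset H.
Proof.
move=> FD; pose P G := (G \in D) && (F \subset G).
have PF : P F by rewrite /P FD subxx.
have [G /andP[GD FG] Gmax] := arg_maxnP (fun G => #|G|) PF.
exists G => //; rewrite inE GD; apply/forallP => X; apply/implyP => XD.
apply/implyP => GX; rewrite eq_sym eqEcard GX /=; apply: Gmax.
by rewrite /P XD (subset_trans FG GX).
Qed.

Lemma facet_face D F : F \in facets D -> F \in D.
Proof. by rewrite inE => /andP[]. Qed.

Lemma facet_maximal D F G : F \in facets D -> G \in D -> F \subset G -> G = F.
Proof. by rewrite inE => /andP[_ /forallP/(_ G)] + GD FG; rewrite GD FG => /eqP. Qed.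

Lemma gen_complex_facets D t :
  (forall F G, F \in D -> G \subset F -> G \in D) -> t =i facets D ->
  gen_complex t = D.
Proof.
move=> downD tD; apply/setP => F; rewrite inE; apply/hasP/idP => [[H Ht FH] | FD].
  by apply: downD FH; apply: facet_face; rewrite -tD.
by have [H HD FH] := face_sub_facet FD; exists H; rewrite ?tD.
Qed.

Lemma card_facet_pure D H : pure D -> H \in facets D -> #|H| = face_size_max D.
Proof.
move=> pureD HD; apply/eqP; rewrite eqn_leq; apply/andP; split.
  exact: leq_bigmax_cond (facet_face HD).
apply/bigmax_leqP => F FD; have [G GD FG] := face_sub_facet FD.
by rewrite (pureD H G HD GD) subset_leq_card.
Qed.

Definition antichain t := {in t &, forall X Y, X \subset Y -> X = Y}.

Lemma antichain_facets D t : {subset t <= facets D} -> antichain t.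
Proof.
move=> tD X Y /tD XD /tD YD XY.
by symmetry; apply: facet_maximal XD (facet_face YD) XY.
Qed.

Lemma facets_gen_complex t : antichain t -> facets (gen_complex t) =i t.
Proof.
move=> anti_t X; apply/idP/idP => [Xf | Xt].
  have [Y Yt XY] := gen_complexP _ _ (facet_face Xf).
  suff <- : Y = X by [].
  by apply: facet_maximal Xf _ XY; apply/gen_complexP; exists Y.
rewrite inE; apply/andP; split; first by apply/gen_complexP; exists X.
apply/forallP => Y; apply/implyP => /gen_complexP[Z Zt YZ]; apply/implyP => XY.
by rewrite eqEsubset XY andbT (anti_t X Z Xt Zt (subset_trans XY YZ)).
Qed.

Lemma leaf_trace t H : antichain (rcons t H) -> H \notin t ->
  is_leaf (gen_complex (rcons t H)) H ->
  exists2 K : {set 'I_n}, K \subset H & powerset H :&: gen_complex t = powerset K.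
Proof.
move=> anti_tH Ht [_ [G [/[!facets_gen_complex anti_tH] + GH branchG]]].
rewrite mem_rcons inE (negPf GH) /= => Gt.
exists (G :&: H); first exact: subsetIr.
apply/setP => F; rewrite !inE; apply/andP/idP => [[FH /hasP[X Xt FX]] | FGH].
  apply: subset_trans (branchG X _ _).
  - by rewrite subsetI FX.
  - by rewrite facets_gen_complex // mem_rcons inE Xt orbT.
  - by apply: contraNneq Ht => <-.
have /andP[FG FH] : (F \subset G) && (F \subset H) by rewrite -subsetI.
by split=> //; apply/hasP; exists G.
Qed.

Section QuasiForestFaces.
Variables (d : nat) (S : seq {set 'I_n}).
Hypotheses (S_antichain : antichain S) (S_uniq : uniq S).
Hypothesis card_S : {in S, forall H, #|H| = d}.
Hypothesis S_leaf : forall j, 0 < j < size S ->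
  is_leaf (gen_complex (take j.+1 S)) (nth set0 S j).

Lemma unimodal_mid_take j :
  unimodal_mid d (fun s => #|level (gen_complex (take j S)) s|).
Proof.
elim: j => [|j IHj].
  by move=> s; rewrite take0 gen_complex_nil !card_level0.
have [lt_jS | le_Sj] := ltnP j (size S); last first.
  by rewrite take_oversize ?(leqW le_Sj) // -(take_oversize le_Sj).
have tH := take_nth set0 lt_jS; set H := nth set0 S j in tH.
have dH : #|H| = d by apply/card_S/mem_nth.
have new_mid : unimodal_mid d (fun s =>
    #|level (powerset H) s| - #|level (powerset H :&: gen_complex (take j S)) s|).
  have [j0 | j_gt0] := posnP j.
    apply: eq_unimodal_mid (unimodal_mid_bin d) => s.
    by rewrite j0 take0 gen_complex_nil setI0 card_level0 subn0 card_level_powerset dH.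
  have anti_tH : antichain (rcons (take j S) H).
    by rewrite -tH; apply: sub_in2 S_antichain => X; apply: mem_take.
  have H_new : H \notin take j S.
    by have := take_uniq j.+1 S_uniq; rewrite tH rcons_uniq => /andP[].
  have leaf_H : is_leaf (gen_complex (rcons (take j S) H)) H.
    by rewrite -tH; apply: S_leaf; rewrite j_gt0.
  have [K KH ->] := leaf_trace anti_tH H_new leaf_H.
  have le_Kd : #|K| <= d by rewrite -dH subset_leq_card.
  apply: eq_unimodal_mid (unimodal_mid_bin_diff le_Kd) => s.
  by rewrite !card_level_powerset dH.
apply: eq_unimodal_mid (unimodal_midD IHj new_mid) => s.
by rewrite tH gen_complex_rcons card_levelU.
Qed.

End QuasiForestFaces.

End Complexes.

Theorem theorem3p2 (n : nat) (D : {set {set 'I_n}}) :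
  is_simplicial_complex D -> pure D -> quasi_forest D ->
  unimodal_upto (fvec D) (face_size_max D).
Proof.
move=> [_ downD] pureD [S [permS leafS]].
have S_facets : S =i facets D by move=> H; rewrite (perm_mem permS) mem_enum.
have S_antichain : antichain S by apply: (@antichain_facets _ D) => H; rewrite S_facets.
have S_uniq : uniq S by rewrite (perm_uniq permS) enum_uniq.
have card_S : {in S, forall H : {set 'I_n}, #|H| = face_size_max D}.
  by move=> H; rewrite S_facets; apply: card_facet_pure.
have := unimodal_mid_upto (unimodal_mid_take S_antichain S_uniq card_S leafS (size S)).
by rewrite take_size (gen_complex_facets downD S_facets).
Qed.
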